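(* Let $I=\{a,b\}$ with positive integers $a<b$. The sequence $(C_0(I),\ldots,C_{s(I)}(I))$ of Naruse-Newton coefficients of $I$ is log-concave if and only if $I$ is one of $\{1,2\}$, $\{1,3\}$, $\{2,3\}$, $\{2,4\}$.
   Context: Partitions are drawn as Young diagrams $\mathbb{D}(\lambda)$ in English notation; $c_{i,j}$ is the cell in row $i$, column $j$. The hook length $h_\lambda(c)$ is the number of cells of $\mathbb{D}(\lambda)$ weakly right of $c$ in its row or weakly below $c$ in its column (counting $c$ once). For $\mu\subseteq\lambda$, an excited diagram of $\lambda/\mu$ is a subset of $\mathbb{D}(\lambda)$ obtained from $\mathbb{D}(\mu)$ by repeatedly replacing a cell $c_{i,j}\in D$ by $c_{i+1,j+1}$, allowed iff $c_{i+1,j+1}\in\mathbb{D}(\lambda)$ and none of $c_{i,j+1},c_{i+1,j},c_{i+1,j+1}$ lies in $D$; $\mathbb{E}(\lambda/\mu)$ is their set. A ribbon with $n$ cells is read from its lower-left to its upper-right cell, each successive cell directly right of or directly above the previous; it corresponds to the set of $i\in\{1,\ldots,n-1\}$ with cell $i$ directly below cell $i+1$. A descent set is a non-empty finite set $I$ of positive integers; $\lambda^I$ is the unique partition with $\lambda^I_1=\lambda^I_2$ such that the cells $c_{i,j}\in\mathbb{D}(\lambda^I)$ with fewer than three of $c_{i,j+1},c_{i+1,j},c_{i+1,j+1}$ in $\mathbb{D}(\lambda^I)$ form a ribbon corresponding to $I$; this ribbon is $\mathbb{D}(\lambda^I)\setminus\mathbb{D}(\mu^I)$ for a partition $\mu^I$.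 Let $s(I)=\lambda^I_1-1$. Naruse-Newton coefficients: every excited diagram of $\lambda^I/\mu^I$ meets row 1 in $\{c_{1,1},\ldots,c_{1,r}\}$, $0\le r\le s$; for $0\le j\le s(I)$, $C_j(I)=\sum_D\prod_{c\in D,\,c\notin\text{row }1}h_{\lambda^I}(c)$, summed over $D\in\mathbb{E}(\lambda^I/\mu^I)$ with exactly $s-j$ cells in row 1. A sequence $(x_k)_{k=0}^m$ is log-concave if $x_k^2\ge x_{k-1}x_{k+1}$ for all $0<k<m$. *)

From mathcomp Require Import all_boot.
Set Implicit Arguments. Unset Strict Implicit. Unset Printing Implicit Defensive.

(* Partitions are sequences of parts  lam = [:: lam_1; lam_2; ...]  (weakly
   decreasing; trailing zeros are harmless).  Cells are 1-indexed pairs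
   (row, column), c_{i,j}.  lam_i = nth 0 lam i.-1 (0 beyond the length). *)

Definition in_diag (lam : seq nat) (i j : nat) : bool :=
  [&& 1 <= i, 1 <= j & j <= nth 0 lam i.-1].

(* We work inside the finite type of cells 'I_N * 'I_N; N is taken large
   enough (see [bnd] below) that every cell of D(lam) is represented. *)
Definition diagram (N : nat) (lam : seq nat) : {set 'I_N * 'I_N} :=
  [set c : 'I_N * 'I_N | in_diag lam c.1 c.2].

Definition hook (N : nat) (lam : seq nat) (c : 'I_N * 'I_N) : nat :=
  #|[set d : 'I_N * 'I_N in @diagram N lam |
       ((d.1 == c.1) && (c.2 <= d.2)) || ((d.2 == c.2) && (c.1 <= d.1))]|.

Definition excite_step (N : nat) (lam : seq nat) (D D' : {set 'I_N * 'I_N}) : bool :=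
  [exists c in D, exists c' : 'I_N * 'I_N,
     [&& (c'.1 : nat) == c.1.+1, (c'.2 : nat) == c.2.+1, c' \in @diagram N lam,
         [forall d in D,
            ~~ [|| ((d.1 : nat) == c.1) && ((d.2 : nat) == c.2.+1),
                   ((d.1 : nat) == c.1.+1) && ((d.2 : nat) == c.2) | d == c']]
       & D' == c' |: (D :\ c)]].

Definition excited (N : nat) (lam mu : seq nat) (D : {set 'I_N * 'I_N}) : bool :=
  connect (@excite_step N lam) (@diagram N mu) D.

(* Descent sets: a non-empty finite set I = {i_1 < ... < i_k} of positive
   integers, represented by the strictly increasing list [:: i_1; ...; i_k].
   The ribbon has n = i_k + 1 cells; with i_0 := 0 and i_{k+1} := i_k + 1,
   row k+1-j (j = 0..k) of D(lam^I) contains ribbon cells i_j+1 .. i_{j+1},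
   in columns i_j - j + 1 .. i_{j+1} - j.  Hence
     lam^I_{k+1-j} = i_{j+1} - j      and      mu^I_{k+1-j} = i_j - j. *)
Definition desc_idx (I : seq nat) (j : nat) : nat :=
  if j == 0 then 0 else if j <= size I then nth 0 I j.-1 else (last 0 I).+1.

Definition lamI (I : seq nat) : seq nat :=
  let k := size I in
  [seq desc_idx I (k.+2 - r) - (k.+1 - r) | r <- iota 1 k.+1].

Definition muI (I : seq nat) : seq nat :=
  let k := size I in
  [seq desc_idx I (k.+1 - r) - (k.+1 - r) | r <- iota 1 k.+1].

Definition sI (I : seq nat) : nat := (head 0 (lamI I)).-1.

Definition bnd (lam : seq nat) : nat := (size lam + head 0 lam).+1.

Definition NN_coeff_gen (N : nat) (lam mu : seq nat) (s j : nat) : nat :=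
  \sum_(D : {set 'I_N * 'I_N} |
          @excited N lam mu D && (#|[set c : 'I_N * 'I_N in D | (c.1 : nat) == 1]| == s - j))
     \prod_(c in D | (c.1 : nat) != 1) @hook N lam c.

Definition NN_coeff (I : seq nat) (j : nat) : nat :=
  NN_coeff_gen (bnd (lamI I)) (lamI I) (muI I) (sI I) j.

Definition log_concave (x : nat -> nat) (m : nat) : Prop :=
  forall k, 0 < k -> k < m -> x k.-1 * x k.+1 <= x k ^ 2.

From mathcomp Require Import all_boot zify.
Set Implicit Arguments. Unset Strict Implicit. Unset Printing Implicit Defensive.

(* For I = {a, b} we have lam^I = (b-1, b-1, a) and mu^I = (b-2, a-1).  An excited
   diagram of lam^I/mu^I is determined by the number r of cells left in row 1 and
   the number t of cells left at the start of row 2: all other cells of mu^I have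
   moved one step diagonally into the next row.  So C_j is a sum over
   t <= min(s-j, a-1) of the weights w(s-j, t).  Moving one more cell out of row 1
   multiplies a weight by one row-2 hook length, and moving a cell out of row 2
   rescales it by (a-t)/(b-t+1); hence C_j = p_j (w_0 + ... + w_min(s-j,a-1)) with
   explicit p_j and w_t := w(s, t).  Comparing three consecutive coefficients shows
   that log-concavity fails at j = 1 when b >= a+3 or b = a+1 >= 4, fails at j = 2
   when b = a+2 >= 5, and holds for {2, 4}; for the three remaining sets s <= 1. *)

Lemma ord_eqE N (i j : 'I_N) : (i == j) = (i == j :> nat).
Proof. by []. Qed.

Lemma card_ord_interval N lo hi : hi < N ->
  #|[set i : 'I_N | lo <= i <= hi]| = hi.+1 - lo.
Proof.
pose P j := lo <= j <= hi.
have countP n : count P (iota 0 n) = minn n hi.+1 - minn n lo.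
  elim: n => [|n IHn] //; rewrite -addn1 iotaD count_cat IHn /= /P.
  case: (boolP (lo <= n <= hi)) => /= Pn; lia.
move=> hiN; rewrite -sum1_card (eq_bigl (fun i : 'I_N => P i)) => [|i]; last by rewrite inE.
rewrite -(big_mkord P (fun=> 1)) sum1_count /index_iota subn0 countP; lia.
Qed.

Lemma card_rect N (P Q : pred nat) :
  #|[set c : 'I_N * 'I_N | P c.1 && Q c.2]| =
  #|[set i : 'I_N | P i]| * #|[set j : 'I_N | Q j]|.
Proof. by rewrite -cardsX; apply: eq_card => -[i j]; rewrite !inE. Qed.

Lemma pred_set_move N (P Q : nat -> nat -> bool) (c c' : 'I_N * 'I_N) :
  (forall i j, Q i j = (i == c'.1) && (j == c'.2) || P i j && ~~ ((i == c.1) && (j == c.2))) ->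
  [set d : 'I_N * 'I_N | Q d.1 d.2] = c' |: ([set d : 'I_N * 'I_N | P d.1 d.2] :\ c).
Proof.
case: c c' => [i j] [i' j'] QE; apply/setP => -[x y].
by rewrite !inE QE !xpair_eqE !ord_eqE (andbC (P _ _)).
Qed.

Lemma excite_step_predP N lam (P : nat -> nat -> bool) (D' : {set 'I_N * 'I_N}) :
  excite_step lam [set c : 'I_N * 'I_N | P c.1 c.2] D' <->
  exists c c' : 'I_N * 'I_N,
    [/\ P c.1 c.2, c'.1 = c.1.+1 :> nat /\ c'.2 = c.2.+1 :> nat, in_diag lam c'.1 c'.2,
        [&& ~~ P c.1 c'.2, ~~ P c'.1 c.2 & ~~ P c'.1 c'.2]
      & D' = c' |: ([set d : 'I_N * 'I_N | P d.1 d.2] :\ c)].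
Proof.
split.
- case/existsP=> c /andP[]; rewrite inE => Pc.
  case/existsP=> c' /and5P[/eqP c'1 /eqP c'2 lam_c' /forall_inP free /eqP ->].
  exists c, c'; split=> //; first by rewrite inE in lam_c'.
  apply/and3P; split; apply/negP => Pd.
  + by move: (free (c.1, c'.2)); rewrite inE /= Pd eqxx c'2 eqxx => /(_ isT).
  + by move: (free (c'.1, c.2)); rewrite inE /= Pd eqxx c'1 eqxx orbT => /(_ isT).
  + by move: (free c'); rewrite inE Pd eqxx !orbT => /(_ isT).
- case=> c [c' [Pc [c'1 c'2] lam_c' /and3P[P12 P21 P22] ->]].
  apply/existsP; exists c; rewrite inE Pc; apply/existsP; exists c'.
  rewrite c'1 c'2 !eqxx inE lam_c' andbT; apply/forall_inP => d; rewrite inE => Pd.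
  apply/negP; case/or3P => [/andP[/eqP d1 /eqP d2] | /andP[/eqP d1 /eqP d2] | /eqP dc'].
  + by move: Pd; rewrite d1 d2 -c'2 (negbTE P12).
  + by move: Pd; rewrite d1 d2 -c'1 (negbTE P21).
  + by move: Pd; rewrite dc' (negbTE P22).
Qed.

Definition lam_pair (a b : nat) : seq nat := [:: b.-1; b.-1; a].
Definition mu_pair (a b : nat) : seq nat := [:: b.-2; a.-1; 0].

Lemma lamI_pair a b : 0 < b -> lamI [:: a; b] = lam_pair a b.
Proof. by move=> b0; rewrite /lamI /lam_pair /desc_idx /=; congr [:: _; _; _]; lia. Qed.

Lemma muI_pair a b : muI [:: a; b] = mu_pair a b.
Proof. by rewrite /muI /mu_pair /desc_idx /=; congr [:: _; _; _]; lia. Qed.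

Lemma sI_pair a b : 0 < b -> sI [:: a; b] = b.-2.
Proof. by move=> b0; rewrite /sI lamI_pair. Qed.

Lemma in_lam_pair a b i j : in_diag (lam_pair a b) i j =
  [|| (i == 1) && (1 <= j <= b.-1), (i == 2) && (1 <= j <= b.-1) | (i == 3) && (1 <= j <= a)].
Proof. by rewrite /in_diag; case: i => [|[|[|[|i]]]] /=; rewrite ?nth_nil; lia. Qed.

Definition row2_hook (a b j : nat) : nat := b - j + (j <= a).

Section Hooks.
Variables (N a b : nat).
Hypotheses (lt3N : 3 < N) (ltbN : b < N) (ltab : a < b).

Lemma hook_row3 (c : 'I_N * 'I_N) : c.1 = 3 :> nat -> 1 <= c.2 <= a ->
  hook (lam_pair a b) c = a.+1 - c.2.
Proof.
case: c => [i j] /= i3 ja; rewrite /hook.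
rewrite (@eq_card _ _ [set d : 'I_N * 'I_N | (3 <= d.1 <= 3) && (j <= d.2 <= a)]).
  rewrite (@card_rect N (fun x => 3 <= x <= 3) (fun y => j <= y <= a)).
  by rewrite !card_ord_interval //; lia.
move=> d; rewrite !inE /in_diag /=.
by rewrite !ord_eqE i3; case: (nat_of_ord d.1) => [|[|[|[|x]]]] /=; rewrite ?nth_nil; lia.
Qed.

Lemma hook_row2 (c : 'I_N * 'I_N) : c.1 = 2 :> nat -> 1 <= c.2 <= b.-1 ->
  hook (lam_pair a b) c = row2_hook a b c.2.
Proof.
case: c => [i j] /= i2 jb; rewrite /hook /row2_hook.
pose arm := [set d : 'I_N * 'I_N | (2 <= d.1 <= 2) && (j <= d.2 <= b.-1)].
pose leg := [set d : 'I_N * 'I_N | (3 <= d.1 <= 2 + (j <= a)) && (j <= d.2 <= j)].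
rewrite (@eq_card _ _ (arm :|: leg)).
  rewrite cardsU (_ : arm :&: leg = set0); last by apply/setP => d; rewrite !inE; lia.
  rewrite cards0 subn0 (@card_rect N (fun x => 2 <= x <= 2) (fun y => j <= y <= b.-1)).
  rewrite (@card_rect N (fun x => 3 <= x <= 2 + (j <= a)) (fun y => j <= y <= j)).
  by rewrite !card_ord_interval //; lia.
move=> d; rewrite !inE /in_diag /=.
by rewrite !ord_eqE i2; case: (nat_of_ord d.1) => [|[|[|[|x]]]] /=; rewrite ?nth_nil; lia.
Qed.

End Hooks.

(* The excited diagram with parameters (r, t): row 1 keeps columns 1..r, whose
   successors r+1..b-2 of mu^I now sit in row 2 at r+2..b-1; row 2 keeps 1..t,
   whose successors t+1..a-1 now sit in row 3 at t+2..a. *)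
Definition exd_cell (a b r t i j : nat) : bool :=
  [|| (i == 1) && (1 <= j <= r), (i == 2) && (r.+2 <= j <= b.-1),
      (i == 2) && (1 <= j <= t) | (i == 3) && (t.+2 <= j <= a)].

Definition exd_ok (a b r t : nat) : bool := [&& t <= r, r <= b.-2 & t <= a.-1].

Section ExcitedCells.
Variables (a b r t : nat).
Hypotheses (lt0a : 0 < a) (ltab : a < b) (ok : exd_ok a b r t).

Lemma exd_cell_move_row1 i j : t < r ->
  exd_cell a b r.-1 t i j =
  (i == 2) && (j == r.+1) || exd_cell a b r t i j && ~~ ((i == 1) && (j == r)).
Proof. by move: ok; rewrite /exd_ok /exd_cell; case: i => [|[|[|[|i]]]] /=; lia. Qed.

Lemma exd_cell_move_row2 i j : 0 < t ->
  exd_cell a b r t.-1 i j =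
  (i == 3) && (j == t.+1) || exd_cell a b r t i j && ~~ ((i == 2) && (j == t)).
Proof. by move: ok; rewrite /exd_ok /exd_cell; case: i => [|[|[|[|i]]]] /=; lia. Qed.

Lemma exd_movable i j : exd_cell a b r t i j -> in_diag (lam_pair a b) i.+1 j.+1 ->
  ~~ exd_cell a b r t i j.+1 -> ~~ exd_cell a b r t i.+1 j ->
  (i = 1 /\ j = r /\ t < r) \/ (i = 2 /\ j = t /\ 0 < t).
Proof.
by move: ok; rewrite in_lam_pair /exd_ok /exd_cell; case: i => [|[|[|[|i]]]] /=; lia.
Qed.

End ExcitedCells.

Definition exdiag N (a b r t : nat) : {set 'I_N * 'I_N} :=
  [set c : 'I_N * 'I_N | exd_cell a b r t c.1 c.2].

Section ExcitedDiagrams.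
Variables (N a b : nat).
Hypotheses (lt3N : 3 < N) (ltbN : b < N) (lt0a : 0 < a) (ltab : a < b).

Let exstep := excite_step (N := N) (lam_pair a b).

Lemma diagram_mu_pair : diagram N (mu_pair a b) = exdiag N a b b.-2 a.-1.
Proof.
apply/setP => c; rewrite !inE /in_diag /exd_cell.
by case: (nat_of_ord c.1) => [|[|[|[|i]]]] /=; rewrite ?nth_nil; lia.
Qed.

Lemma exdiag_step_inv r t D : exd_ok a b r t -> exstep (exdiag N a b r t) D ->
  exists r' t', exd_ok a b r' t' /\ D = exdiag N a b r' t'.
Proof.
move=> ok /excite_step_predP[c [c' [exd_c [c'1 c'2] lam_c' /and3P[free12 free21 _] ->]]].
rewrite c'1 c'2 in lam_c' free12 free21.
have [[c1 [c2 tr]] | [c1 [c2 t0]]] := exd_movable lt0a ltab ok exd_c lam_c' free12 free21.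
- exists r.-1, t; split; first by move: ok; rewrite /exd_ok; lia.
  by apply/esym/pred_set_move => i j; rewrite exd_cell_move_row1 // c'1 c'2 c1 c2.
- exists r, t.-1; split; first by move: ok; rewrite /exd_ok; lia.
  by apply/esym/pred_set_move => i j; rewrite exd_cell_move_row2 // c'1 c'2 c1 c2.
Qed.

Lemma exdiag_step_row1 r t : exd_ok a b r t -> t < r ->
  exstep (exdiag N a b r t) (exdiag N a b r.-1 t).
Proof.
move=> ok tr; have [lt1N lt2N rN r1N] : [/\ 1 < N, 2 < N, r < N & r.+1 < N].
  by move: ok; rewrite /exd_ok; split; lia.
apply/excite_step_predP; exists (Ordinal lt1N, Ordinal rN), (Ordinal lt2N, Ordinal r1N).
split=> //=; last by apply: pred_set_move => i j; rewrite exd_cell_move_row1.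
all: by move: ok; rewrite /exd_ok /exd_cell ?in_lam_pair; lia.
Qed.

Lemma exdiag_step_row2 r t : exd_ok a b r t -> 0 < t ->
  exstep (exdiag N a b r t) (exdiag N a b r t.-1).
Proof.
move=> ok t0; have [lt2N tN t1N] : [/\ 2 < N, t < N & t.+1 < N].
  by move: ok; rewrite /exd_ok; split; lia.
apply/excite_step_predP; exists (Ordinal lt2N, Ordinal tN), (Ordinal lt3N, Ordinal t1N).
split=> //=; last by apply: pred_set_move => i j; rewrite exd_cell_move_row2.
all: by move: ok; rewrite /exd_ok /exd_cell ?in_lam_pair; lia.
Qed.

Lemma exdiag_connect_row2 r t t' : exd_ok a b r t' -> t <= t' ->
  connect exstep (exdiag N a b r t') (exdiag N a b r t).
Proof.
elim: t' => [|t' IHt'] ok le_tt'; first by have -> : t = 0 by lia.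
have [-> // | ne_tt'] := eqVneq t t'.+1.
apply: connect_trans (connect1 (exdiag_step_row2 ok _)) (IHt' _ _) => //.
all: by move: ok; rewrite /exd_ok; lia.
Qed.

Lemma exdiag_connect_row1 r r' t : exd_ok a b r' t -> t <= r -> r <= r' ->
  connect exstep (exdiag N a b r' t) (exdiag N a b r t).
Proof.
elim: r' => [|r' IHr'] ok tr le_rr'; first by have -> : r = 0 by lia.
have [-> // | ne_rr'] := eqVneq r r'.+1.
apply: connect_trans (connect1 (exdiag_step_row1 ok _)) (IHr' _ _ _) => //.
all: by move: ok; rewrite /exd_ok; lia.
Qed.

Lemma excited_pairP D :
  excited (lam_pair a b) (mu_pair a b) D <->
  exists r t, exd_ok a b r t /\ D = exdiag N a b r t.
Proof.
rewrite /excited diagram_mu_pair; split.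
- case/connectP => p; have : exd_ok a b b.-2 a.-1 by rewrite /exd_ok; lia.
  elim: p b.-2 a.-1 => [|D' p IHp] r t ok /=; first by move=> _ ->; exists r, t.
  by case/andP=> /(exdiag_step_inv ok)[r' [t' [ok' ->]]]; apply: IHp.
- case=> r [t [ok ->]]; apply: (connect_trans (y := exdiag N a b b.-2 t)).
    by apply: exdiag_connect_row2; move: ok; rewrite /exd_ok; lia.
  by apply: exdiag_connect_row1; move: ok; rewrite /exd_ok; lia.
Qed.

End ExcitedDiagrams.

Definition exd_weight N (a b r t : nat) : nat :=
  \prod_(c in exdiag N a b r t | (c.1 : nat) != 1) hook (lam_pair a b) c.

Section Weights.
Variables (N a b : nat).
Hypotheses (lt3N : 3 < N) (ltbN : b < N) (lt0a : 0 < a) (ltab : a < b).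

Lemma card_exdiag_row1 r t : r < N ->
  #|[set c in exdiag N a b r t | (c.1 : nat) == 1]| = r.
Proof.
move=> rN; rewrite (@eq_card _ _ [set c : 'I_N * 'I_N | (1 <= c.1 <= 1) && (1 <= c.2 <= r)]).
  rewrite (@card_rect N (fun i => 1 <= i <= 1) (fun j => 1 <= j <= r)).
  by rewrite !card_ord_interval //; lia.
move=> c; rewrite !inE /exd_cell.
by case: (nat_of_ord c.1) => [|[|[|[|i]]]] /=; lia.
Qed.

Lemma exdiag_inj r t1 t2 : t1 <= r -> t2 <= r -> r < N ->
  exdiag N a b r t1 = exdiag N a b r t2 -> t1 = t2.
Proof.
move=> t1r t2r rN E; apply/eqP; rewrite eqn_leq; apply/andP; split; rewrite leqNgt.
all: apply/negP => lt_t; have tN : maxn t1 t2 < N by lia.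
all: by move/setP/(_ (Ordinal (ltn_trans (isT : 2 < 3) lt3N), Ordinal tN)): E;
       rewrite !inE /exd_cell /=; lia.
Qed.

Lemma NN_coeff_gen_pair j : j <= b.-2 ->
  NN_coeff_gen N (lam_pair a b) (mu_pair a b) b.-2 j =
  \sum_(t < (minn (b.-2 - j) a.-1).+1) exd_weight N a b (b.-2 - j) t.
Proof.
move=> jb; set r := b.-2 - j; set m := minn r a.-1.
have rN : r < N by lia.
rewrite /NN_coeff_gen (eq_bigl (mem ((fun t : 'I_m.+1 => exdiag N a b r t) @: setT))).
  rewrite big_imset => [|t1 t2 _ _ /exdiag_inj E]; first by apply: eq_bigl => t; rewrite inE.
  by apply/val_inj/E => //; have := ltn_ord t1; have := ltn_ord t2; lia.
move=> D /=; apply/andP/imsetP.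
- case=> /(excited_pairP lt3N ltbN lt0a ltab)[r' [t [ok ->]]] /eqP.
  rewrite card_exdiag_row1; last by move: ok; rewrite /exd_ok; lia.
  move=> r'r; have tm : t < m.+1 by move: ok; rewrite /exd_ok /m /r; lia.
  by exists (Ordinal tm); rewrite ?inE // r'r.
- case=> t _ ->; have tm := ltn_ord t; split.
    apply/(excited_pairP lt3N ltbN lt0a ltab); exists r, t; split => //.
    by move: tm; rewrite /exd_ok /m /r; lia.
  by rewrite card_exdiag_row1.
Qed.

Lemma exd_weight_move_row1 r t : exd_ok a b r t -> t < r ->
  exd_weight N a b r.-1 t = row2_hook a b r.+1 * exd_weight N a b r t.
Proof.
move=> ok tr; have [lt1N lt2N rN r1N] : [/\ 1 < N, 2 < N, r < N & r.+1 < N].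
  by move: ok; rewrite /exd_ok; split; lia.
rewrite /exd_weight !big_mkcondr /=.
rewrite /exdiag (@pred_set_move N (exd_cell a b r t) _
                   (Ordinal lt1N, Ordinal rN) (Ordinal lt2N, Ordinal r1N));
  last by move=> i j; rewrite exd_cell_move_row1.
rewrite big_setU1 /=; last by rewrite !inE /exd_cell /=; lia.
rewrite [in RHS](big_setD1 (Ordinal lt1N, Ordinal rN)) /=; last by rewrite inE /exd_cell /=; lia.
by rewrite mul1n hook_row2 //=; move: ok; rewrite /exd_ok; lia.
Qed.

Lemma exd_weight_move_row2 r t : exd_ok a b r t -> 0 < t ->
  exd_weight N a b r t.-1 * (b - t).+1 = exd_weight N a b r t * (a - t).
Proof.
move=> ok t0; have [lt2N tN t1N] : [/\ 2 < N, t < N & t.+1 < N].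
  by move: ok; rewrite /exd_ok; split; lia.
rewrite /exd_weight !big_mkcondr /=.
rewrite /exdiag (@pred_set_move N (exd_cell a b r t) _
                   (Ordinal lt2N, Ordinal tN) (Ordinal lt3N, Ordinal t1N));
  last by move=> i j; rewrite exd_cell_move_row2.
rewrite big_setU1 /=; last by rewrite !inE /exd_cell /=; lia.
rewrite [in RHS](big_setD1 (Ordinal lt2N, Ordinal tN)) /=; last by rewrite inE /exd_cell /=; lia.
by rewrite hook_row3 ?hook_row2 /row2_hook //=; move: ok; rewrite /exd_ok; lia.
Qed.

Lemma exd_weight_shift_row1 r k t : exd_ok a b r t -> k <= r -> t <= r - k ->
  exd_weight N a b (r - k) t = (\prod_(i < k) row2_hook a b (r.+1 - i)) * exd_weight N a b r t.
Proof.
move=> ok; elim: k => [|k IHk] kr tk; first by rewrite big_ord0 mul1n subn0.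
have okk : exd_ok a b (r - k) t by move: ok; rewrite /exd_ok; lia.
rewrite subnS exd_weight_move_row1 // ?IHk; try lia.
by rewrite big_ord_recr /= -subSn 1?ltnW // mulnCA mulnA.
Qed.

Lemma exd_weight_gt0 r t : exd_ok a b r t -> 0 < exd_weight N a b r t.
Proof.
move=> ok; rewrite /exd_weight; elim/big_ind: _ => // [x y|c /andP[c_in _]].
  by rewrite muln_gt0 => -> ->.
apply/card_gt0P; exists c; rewrite !inE eqxx leqnn /in_diag.
move: ok c_in; rewrite !inE /exd_ok /exd_cell.
by case: (nat_of_ord c.1) => [|[|[|[|i]]]] /=; lia.
Qed.

End Weights.

Definition row1_full_weight (a b t : nat) : nat := exd_weight (bnd (lam_pair a b)) a b b.-2 t.

Section RowOneFull.
Variables (a b : nat).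
Hypotheses (lt0a : 0 < a) (ltab : a < b).

Let lt3N : 3 < bnd (lam_pair a b). Proof. by rewrite /bnd /=; lia. Qed.
Let ltbN : b < bnd (lam_pair a b). Proof. by rewrite /bnd /=; lia. Qed.

Lemma NN_coeff_pairE j m p : j <= b.-2 -> minn (b.-2 - j) a.-1 = m ->
  \prod_(i < j) row2_hook a b (b.-1 - i) = p ->
  NN_coeff [:: a; b] j = p * \sum_(t < m.+1) row1_full_weight a b t.
Proof.
move=> jb <- <-; rewrite /NN_coeff lamI_pair ?muI_pair ?sI_pair; try lia.
rewrite NN_coeff_gen_pair // big_distrr; apply: eq_bigr => t _ /=.
have tm := ltn_ord t; rewrite exd_weight_shift_row1 //; try lia.
  by rewrite (_ : b.-2.+1 = b.-1) //; lia.
by rewrite /exd_ok; lia.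
Qed.

Lemma row1_full_weight_gt0 t : t <= a.-1 -> 0 < row1_full_weight a b t.
Proof. by move=> ta; apply: exd_weight_gt0; rewrite /exd_ok; lia. Qed.

Lemma row1_full_weight_ratio t k l : 0 < t < a -> (b - t).+1 = k -> a - t = l ->
  row1_full_weight a b t.-1 * k = row1_full_weight a b t * l.
Proof. by move=> ta <- <-; apply: exd_weight_move_row2; rewrite /exd_ok; lia. Qed.

End RowOneFull.

Ltac NN_coeff_pair_eval :=
  apply: NN_coeff_pairE; rewrite ?big_ord_recr ?big_ord0 /row2_hook /=; lia.

Lemma NN_pair_wide_not_lc a b : 0 < a -> a.+3 <= b ->
  NN_coeff [:: a; b] 1 ^ 2 < NN_coeff [:: a; b] 0 * NN_coeff [:: a; b] 2.
Proof.
move=> a0 wide; set S := \sum_(t < a.-1.+1) row1_full_weight a b t.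
have C0 : NN_coeff [:: a; b] 0 = 1 * S by NN_coeff_pair_eval.
have C1 : NN_coeff [:: a; b] 1 = 1 * S by NN_coeff_pair_eval.
have C2 : NN_coeff [:: a; b] 2 = 2 * S by NN_coeff_pair_eval.
have S_gt0 : 0 < S.
  by rewrite /S big_ord_recl addn_gt0 row1_full_weight_gt0 //; lia.
rewrite C0 C1 C2; nia.
Qed.

Lemma NN_pair_gap1_not_lc n :
  NN_coeff [:: n.+3; n.+4] 1 ^ 2 < NN_coeff [:: n.+3; n.+4] 0 * NN_coeff [:: n.+3; n.+4] 2.
Proof.
set C := NN_coeff _; set w := row1_full_weight n.+3 n.+4.
have C0 : C 0 = 1 * \sum_(t < n.+3) w t by NN_coeff_pair_eval.
have C1 : C 1 = 2 * \sum_(t < n.+2) w t by NN_coeff_pair_eval.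
have C2 : C 2 = 6 * \sum_(t < n.+1) w t by NN_coeff_pair_eval.
have R1 : w n.+1 * 3 = w n.+2 * 1 by apply: (@row1_full_weight_ratio _ _ _ _ n.+2); lia.
have R2 : w n * 4 = w n.+1 * 2 by apply: (@row1_full_weight_ratio _ _ _ _ n.+1); lia.
have w_gt0 : 0 < w n by apply: row1_full_weight_gt0 => //; lia.
rewrite C0 C1 C2 !big_ord_recr /=; nia.
Qed.

Lemma NN_pair_gap2_not_lc n :
  NN_coeff [:: n.+3; n.+3.+2] 2 ^ 2 <
  NN_coeff [:: n.+3; n.+3.+2] 1 * NN_coeff [:: n.+3; n.+3.+2] 3.
Proof.
set C := NN_coeff _; set w := row1_full_weight n.+3 n.+3.+2.
have C1 : C 1 = 1 * \sum_(t < n.+3) w t by NN_coeff_pair_eval.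
have C2 : C 2 = 3 * \sum_(t < n.+2) w t by NN_coeff_pair_eval.
have C3 : C 3 = 12 * \sum_(t < n.+1) w t by NN_coeff_pair_eval.
have R1 : w n.+1 * 4 = w n.+2 * 1 by apply: (@row1_full_weight_ratio _ _ _ _ n.+2); lia.
have R2 : w n * 5 = w n.+1 * 2 by apply: (@row1_full_weight_ratio _ _ _ _ n.+1); lia.
have w_gt0 : 0 < w n by apply: row1_full_weight_gt0 => //; lia.
rewrite C1 C2 C3 !big_ord_recr /=; nia.
Qed.

Lemma NN_pair_2_4_lc : log_concave (NN_coeff [:: 2; 4]) 2.
Proof.
move=> k k0 k2; have -> : k = 1 by lia.
set w := row1_full_weight 2 4.
have C0 : NN_coeff [:: 2; 4] 0 = 1 * \sum_(t < 2) w t by NN_coeff_pair_eval.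
have C1 : NN_coeff [:: 2; 4] 1 = 1 * \sum_(t < 2) w t by NN_coeff_pair_eval.
have C2 : NN_coeff [:: 2; 4] 2 = 3 * \sum_(t < 1) w t by NN_coeff_pair_eval.
have R : w 0 * 4 = w 1 * 1 by apply: (@row1_full_weight_ratio _ _ _ _ 1).
rewrite /= C0 C1 C2 !big_ord_recr big_ord0 /=; nia.
Qed.

Theorem corollary6p4 (a b : nat) :
  0 < a -> a < b ->
  (log_concave (NN_coeff [:: a; b]) (sI [:: a; b]) <->
   [\/ (a = 1 /\ b = 2), (a = 1 /\ b = 3), (a = 2 /\ b = 3) | (a = 2 /\ b = 4)]).
Proof.
move=> a0 ab; rewrite sI_pair; last by lia.
split; last first.
  by case=> -[-> ->] /= k k0 ks; [lia | lia | lia | exact: NN_pair_2_4_lc].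
move=> lc; have [wide | near] := leqP a.+3 b.
  have b3 : 1 < b.-2 by lia.
  by have /= := lc 1 isT b3; have := NN_pair_wide_not_lc a0 wide; lia.
have [small | big] := leqP a 2.
  have [-> | ->] : b = a.+1 \/ b = a.+2 by lia.
  - by case: a a0 small {ab lc near} => [|[|[|]]] // _ _; [constructor 1 | constructor 3].
  - by case: a a0 small {ab lc near} => [|[|[|]]] // _ _; [constructor 2 | constructor 4].
have [n an] : exists n, a = n.+3 by exists (a - 3); lia.
subst a.
have [bE | bE] : b = n.+4 \/ b = n.+3.+2 by lia.
- by subst b; have /= := lc 1 isT isT; have := NN_pair_gap1_not_lc n; lia.
- by subst b; have /= := lc 2 isT isT; have := NN_pair_gap2_not_lc n; lia.
Qed.
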